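(* Let $n>2k\ge2$ be integers and let $J(n,k)$ be the Johnson graph with vertex set $V$ the $k$-subsets of $[n]=\{1,\dots,n\}$, two vertices adjacent iff their intersection has size $k-1$; let $A$ be its adjacency matrix. Let $w_1\neq w_2$ be two vertices, $\gamma>0$, and $H=-\gamma A-|w_1\rangle\langle w_1|-|w_2\rangle\langle w_2|$ on $\mathcal{H}=\mathbb{C}^V$. Let $\mathcal{H}_{\mathrm{inv}}$ be the subspace of vectors $f\in\mathcal{H}$ such that $f(v)=f(v')$ whenever $|v\cap w_1\cap w_2|=|v'\cap w_1\cap w_2|$ and the multisets $\{|v\cap w_1|,|v\cap w_2|\}$ and $\{|v'\cap w_1|,|v'\cap w_2|\}$ coincide. Let $|\lambda\rangle\in\mathcal{H}_{\mathrm{inv}}$ be a nonzero vector with $H|\lambda\rangle=\lambda|\lambda\rangle$, and let $\alpha=\langle w_1|\lambda\rangle$ (which equals $\langle w_2|\lambda\rangle$). Then the following are equivalent: (i) $\lambda\in\sigma(-\gamma A)$; (ii) $-\gamma A|\lambda\rangle=\lambda|\lambda\rangle$; (iii) $\alpha=0$.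
   Context: $\{|v\rangle : v\in V\}$ is the computational basis; $\sigma(U)$ denotes the spectrum of $U$. *)

From HB Require Import structures.
From mathcomp Require Import all_boot all_order all_algebra.
Set Implicit Arguments. Unset Strict Implicit. Unset Printing Implicit Defensive.
Import Order.TTheory GRing.Theory Num.Theory.
Local Open Scope ring_scope.

Definition kset (n k : nat) := {v : {set 'I_n} | #|v| == k}.

Definition johnson_adj (n k : nat) (v u : kset n k) : bool :=
  #|val v :&: val u| == k.-1.

Definition johnson_A (n k : nat) (C : numClosedFieldType)
  (f : kset n k -> C) : kset n k -> C :=
  fun v => \sum_(u : kset n k | johnson_adj v u) f u.

Definition search_H (n k : nat) (C : numClosedFieldType) (gamma : C)
  (w1 w2 : kset n k) (f : kset n k -> C) : kset n k -> C :=
  fun v => - gamma * johnson_A f v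
           - (v == w1)%:R * f w1 - (v == w2)%:R * f w2.

Definition in_spectrum (T : finType) (C : numClosedFieldType)
  (M : (T -> C) -> (T -> C)) (lam : C) : Prop :=
  exists f : T -> C, (exists v, f v != 0) /\ forall v, M f v = lam * f v.

Definition in_Hinv (n k : nat) (C : numClosedFieldType) (w1 w2 : kset n k)
  (f : kset n k -> C) : Prop :=
  forall v v' : kset n k,
    #|val v :&: val w1 :&: val w2| = #|val v' :&: val w1 :&: val w2| ->
    perm_eq [:: #|val v :&: val w1|; #|val v :&: val w2|]
            [:: #|val v' :&: val w1|; #|val v' :&: val w2|] ->
    f v = f v'.

(* Suppose alpha = f(w1) = f(w2) is nonzero and h is an eigenvector of -gamma A
   for the same eigenvalue lam.  Since A is symmetric and (-gamma A - lam) f is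
   alpha (|w1> + |w2>), pairing with h gives h(w1) + h(w2) = 0.  The eigenspace
   is invariant under the symmetric group of [n], which acts transitively on
   ordered pairs of k-sets with a given intersection size m = |w1 /\ w2|, so
   h(X) + h(Y) = 0 whenever |X /\ Y| = m.  For 2k < n the k-sets with pairwise
   intersection m contain an odd cycle (arcs of length k on a (2k+1)-cycle,
   rotated by k - m), along which h must alternate in sign; hence h vanishes. *)
From HB Require Import structures.
From mathcomp Require Import all_boot all_order all_algebra all_fingroup.
From mathcomp Require Import zify ring.
Set Implicit Arguments. Unset Strict Implicit. Unset Printing Implicit Defensive.
Import Order.TTheory GRing.Theory Num.Theory.
Local Open Scope ring_scope.

Lemma relabel_perm (T : finType) (L : eqType) (p q : T -> L) :
  (forall l, #|[pred x | p x == l]| = #|[pred x | q x == l]|) ->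
  exists s : {perm T}, forall x, q (s x) = p x.
Proof.
move=> fibres; have [m] := ubnP #|[pred x | q x != p x]|.
elim: m q fibres => // m IH q fibres lt_mismatch_m.
case: (pickP [pred x | q x != p x]) => [x /= qx_neq | q_eq_p]; last first.
  by exists 1%g => x; rewrite perm1; apply/eqP/negbFE/q_eq_p.
have [y /andP [/eqP qy pxy]] : exists y, (q y == p x) && (p y != p x).
  apply/existsP; apply: contraT; rewrite negb_exists => /forallP q_sub_p.
  have /subset_cardP fibre_eq : [pred z | q z == p x] \subset [pred z | p z == p x].
    by apply/subsetP => z /[!inE] qz; have := q_sub_p z; rewrite qz negbK.
  by move: (fibre_eq (esym (fibres (p x))) x); rewrite !inE eqxx (negbTE qx_neq).
(* Precomposing q with (x y) repairs x and creates no new mismatch, as y was one. *)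
pose t := tperm x y.
have [s qts] : exists s : {perm T}, forall z, q (t (s z)) = p z.
  apply: (IH (q \o t)) => [l|].
    rewrite fibres -[LHS]cardsE -(card_preimset _ (@perm_inj _ t)).
    by apply: eq_card => z; rewrite !inE.
  rewrite -ltnS; apply: leq_trans lt_mismatch_m.
  rewrite ltnS [X in (_ < X)%N](cardD1 x) inE qx_neq add1n ltnS.
  apply/subset_leq_card/subsetP => z; rewrite !inE /= /t.
  case: tpermP => [->|->|xz _]; first by rewrite qy eqxx.
    by rewrite qy (eq_sym (p x)) pxy andbT => _; apply: contraNneq pxy => ->.
  by move=> ->; rewrite andbT; apply/eqP.
by exists (s * t)%g => z; rewrite permM.
Qed.

Lemma card_mem_pair (T : finType) (A B : {set T}) b1 b2 :
  #|[pred x | (x \in A, x \in B) == (b1, b2)]| =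
  match b1, b2 with
  | true, true => #|A :&: B|
  | true, false => #|A| - #|A :&: B|
  | false, true => #|B| - #|A :&: B|
  | false, false => #|T| - (#|A| + #|B| - #|A :&: B|)
  end%N.
Proof.
case: b1; case: b2;
  [| rewrite -cardsD | rewrite setIC -cardsD | rewrite -cardsU -(cardsC (A :|: B)) addKn];
  by apply: eq_card => x; rewrite !inE; case: (x \in A); case: (x \in B).
Qed.

Lemma perm_set_pair (T : finType) (X Y Z W : {set T}) :
  #|X| = #|Z| -> #|Y| = #|W| -> #|X :&: Y| = #|Z :&: W| ->
  exists s : {perm T}, s @^-1: Z = X /\ s @^-1: W = Y.
Proof.
move=> cardXZ cardYW cardI.
have fibres l : #|[pred x | (x \in X, x \in Y) == l]| = #|[pred x | (x \in Z, x \in W) == l]|.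
  by case: l => [[] []]; rewrite !card_mem_pair ?cardXZ ?cardYW ?cardI.
have [s sXY] := relabel_perm fibres.
by exists s; split; apply/setP => x; rewrite inE;
  [exact: (congr1 fst (sXY x)) | exact: (congr1 snd (sXY x))].
Qed.

Lemma alternating_cycle_eq0 (R : numDomainType) (h : nat -> R) N :
  odd N -> h N = h 0%N -> (forall i, h i + h i.+1 = 0) -> h 0%N = 0.
Proof.
move=> oddN hN alt.
have alt_sign i : h i = (-1) ^+ i * h 0%N.
  elim: i => [|i IHi]; first by rewrite mul1r.
  by rewrite exprS -mulrA -IHi mulN1r; apply/eqP; rewrite -addr_eq0 addrC alt.
have : h 0%N *+ 2 = 0 by rewrite mulr2n -{1}hN alt_sign -signr_odd oddN mulN1r addNr.
by move/eqP; rewrite mulrn_eq0 orFb => /eqP.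
Qed.

Lemma card_ord_lt N m : (m <= N)%N -> #|[set i : 'I_N | (i < m)%N]| = m.
Proof.
by move=> le_mN; rewrite -sum1dep_card (big_ord_narrow le_mN) -[RHS]card_ord -sum1_card.
Qed.

Section CyclicArcs.
Variable k : nat.
Notation Z := 'I_(k.*2).+1.

Definition arc (c : Z) : {set Z} := [set j : Z | ((j - c)%R < k)%N].

Lemma arcD c e : arc (c + e) = (fun j => j - e) @^-1: arc c.
Proof. by apply/setP => j; rewrite !inE opprD addrA addrAC. Qed.

Lemma card_arc c : #|arc c| = k.
Proof.
rewrite -[c]add0r arcD card_preimset; last exact: addIr.
have -> : arc 0 = [set j : Z | (j < k)%N] by apply/setP => j; rewrite !inE subr0.
by rewrite card_ord_lt //; lia.
Qed.

Lemma val_subZ (j d : Z) :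
  val (j - d) = if (d <= j)%N then (j - d)%N else (j + (k.*2).+1 - d)%N.
Proof.
have [lt_jN lt_dN] := (ltn_ord j, ltn_ord d).
rewrite /= modnDmr; case: ifP => le_dj.
  have -> : (j + (k.*2.+1 - d) = j - d + k.*2.+1)%N by lia.
  by rewrite modnDr modn_small //; lia.
by rewrite modn_small; lia.
Qed.

Lemma arc0I (d : Z) : (d <= k)%N ->
  arc 0 :&: arc d = [set j : Z | (j < k)%N] :\: [set j : Z | (j < d)%N].
Proof.
move=> le_dk; apply/setP => j; rewrite !inE subr0 val_subZ -leqNgt.
by case: (leqP d j) => ?; case: (ltnP j k) => ? /=; lia.
Qed.

Lemma card_arcI (c d : Z) : (d <= k)%N -> #|arc c :&: arc (c + d)| = (k - d)%N.
Proof.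
move=> le_dk; rewrite -[c]add0r addrAC 2!arcD add0r -preimsetI.
rewrite card_preimset; last exact: addIr.
rewrite arc0I // cardsD (setIidPr _) ?card_ord_lt //; try lia.
by apply/subsetP => j; rewrite !inE => /leq_trans; apply.
Qed.

Lemma mulrn_Zp_modulus (d : Z) : d *+ (k.*2).+1 = 0.
Proof. by apply: val_inj; rewrite Zp_mulrn /= modnMl. Qed.

End CyclicArcs.

Lemma kset_odd_cycle n k m : (k.*2 < n)%N -> (m <= k)%N ->
  exists N (Y : nat -> kset n k),
    [/\ odd N, Y N = Y 0%N & forall i, #|val (Y i) :&: val (Y i.+1)| = m].
Proof.
move=> lt_2k_n le_mk; pose emb := widen_ord lt_2k_n.
have emb_inj : injective emb by move=> i j /(congr1 val) eq_ij; apply: val_inj.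
have card_emb_arc c : #|emb @: arc c| == k by rewrite card_imset // card_arc.
pose d : 'I_(k.*2).+1 := inord (k - m).
have val_d : (d : nat) = (k - m)%N by rewrite inordK //; lia.
exists (k.*2).+1, (fun i => exist (fun A : {set 'I_n} => #|A| == k) _ (card_emb_arc (d *+ i))).
split.
- by rewrite /= odd_double.
- by apply: val_inj; rewrite /= mulrn_Zp_modulus.
move=> i; rewrite /= -imsetI; last by move=> ? ? _ _; apply: emb_inj.
by rewrite card_imset // mulrSr card_arcI val_d //; lia.
Qed.

Lemma sum_mul_delta (T : finType) (R : pzSemiRingType) (h : T -> R) w c :
  \sum_v h v * ((v == w)%:R * c) = h w * c.
Proof.
rewrite (bigD1 w) //= eqxx mul1r big1 ?addr0 // => v /negbTE ->.
by rewrite mul0r mulr0.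
Qed.

Section JohnsonSymmetry.
Variables (n k : nat) (C : numClosedFieldType).
Notation V := (kset n k).

Lemma kset_act_subproof (s : {perm 'I_n}) (v : V) : #|s @^-1: val v| == k.
Proof. by rewrite card_preimset ?(valP v) //; exact: perm_inj. Qed.

Definition kset_act (s : {perm 'I_n}) (v : V) : V :=
  exist (fun A : {set 'I_n} => #|A| == k) _ (kset_act_subproof s v).

Lemma kset_act_inj s : injective (kset_act s).
Proof.
move=> v u /(congr1 (fun A : V => val A)) /= eq_preim; apply: val_inj.
by apply/setP => x; have /setP/(_ ((s^-1)%g x)) := eq_preim; rewrite !inE permKV.
Qed.

Lemma kset_act_pair (X Y Z W : V) : #|val X :&: val Y| = #|val Z :&: val W| ->
  exists s, kset_act s Z = X /\ kset_act s W = Y.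
Proof.
move=> cardI; have card_k (v : V) : #|val v| = k by exact: eqP (valP v).
have [s [sZ sW]] := perm_set_pair (etrans (card_k X) (esym (card_k Z)))
  (etrans (card_k Y) (esym (card_k W))) cardI.
by exists s; split; apply: val_inj.
Qed.

Lemma kset_act_transitive (u v : V) : exists s, kset_act s u = v.
Proof.
have [|s [su _]] := @kset_act_pair v v u u; last by exists s.
by rewrite !setIid (eqP (valP u)) (eqP (valP v)).
Qed.

Lemma johnson_adj_act s v u :
  johnson_adj (kset_act s v) (kset_act s u) = johnson_adj v u.
Proof. by rewrite /johnson_adj /= -preimsetI card_preimset //; exact: perm_inj. Qed.

Lemma johnson_adj_sym (v u : V) : johnson_adj v u = johnson_adj u v.
Proof. by rewrite /johnson_adj setIC. Qed.

Lemma johnson_A_act s (h : V -> C) v :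
  johnson_A (h \o kset_act s) v = johnson_A h (kset_act s v).
Proof.
rewrite /johnson_A [RHS](reindex_inj (@kset_act_inj s)) /=.
by apply: eq_bigl => u; rewrite johnson_adj_act.
Qed.

Lemma johnson_A_sym (f h : V -> C) :
  \sum_v h v * johnson_A f v = \sum_v f v * johnson_A h v.
Proof.
rewrite /johnson_A.
under eq_bigr do rewrite big_distrr big_mkcond /=.
under [RHS]eq_bigr do rewrite big_distrr big_mkcond /=.
rewrite exchange_big; apply: eq_bigr => u _; apply: eq_bigr => v _.
by rewrite johnson_adj_sym; case: ifP => // _; rewrite mulrC.
Qed.

Variables (gamma lam : C).

Definition johnson_eigen (h : V -> C) := forall v, - gamma * johnson_A h v = lam * h v.

Lemma johnson_eigen_act s h : johnson_eigen h -> johnson_eigen (h \o kset_act s).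
Proof. by move=> eig_h v; rewrite johnson_A_act; exact: eig_h. Qed.

Lemma johnson_eigen_orth (f h : V -> C) : johnson_eigen h ->
  \sum_v h v * (- gamma * johnson_A f v - lam * f v) = 0.
Proof.
move=> eig_h.
have expand (a b : V -> C) : \sum_v a v * (- gamma * johnson_A b v - lam * b v) =
    - gamma * (\sum_v a v * johnson_A b v) - lam * (\sum_v a v * b v).
  by rewrite !mulr_sumr -sumrB; apply: eq_bigr => v _; ring.
rewrite expand johnson_A_sym (eq_bigr _ (fun v _ => mulrC (h v) (f v))).
by rewrite -expand big1 // => v _; rewrite eig_h subrr mulr0.
Qed.

End JohnsonSymmetry.

Lemma in_Hinv_swap n k (C : numClosedFieldType) (w1 w2 : kset n k) (f : kset n k -> C) :
  in_Hinv w1 w2 f -> f w2 = f w1.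
Proof.
move=> hinv; apply: hinv; first by rewrite setIAC !setIid setIC.
by rewrite !setIid (setIC (val w2)) (eqP (valP w1)) (eqP (valP w2)) (perm_catC [:: _]).
Qed.

Section SearchHamiltonian.
Variables (n k : nat) (C : numClosedFieldType) (gamma lam : C) (w1 w2 : kset n k).
Variable f : kset n k -> C.
Hypotheses (w12 : w1 != w2) (fw : f w2 = f w1).
Hypothesis eig_f : forall v, search_H gamma w1 w2 f v = lam * f v.

Lemma search_eigen_johnson_iff : johnson_eigen gamma lam f <-> f w1 = 0.
Proof.
split => [eigA_f | fw1_0 v].
  have := eig_f w1; rewrite /search_H eigA_f eqxx (negbTE w12) mul1r mul0r subr0.
  by move/(congr1 (fun x => lam * f w1 - x)); rewrite subKr subrr.
by have := eig_f v; rewrite /search_H fw fw1_0 !mulr0 !subr0.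
Qed.

Hypothesis fw1_neq0 : f w1 != 0.

Lemma johnson_eigen_w_sum (h : kset n k -> C) :
  johnson_eigen gamma lam h -> h w1 + h w2 = 0.
Proof.
move=> eig_h.
have defect v : - gamma * johnson_A f v - lam * f v =
    (v == w1)%:R * f w1 + (v == w2)%:R * f w2.
  by rewrite -eig_f /search_H; ring.
have : (h w1 + h w2) * f w1 = 0.
  rewrite -(johnson_eigen_orth f eig_h); under [RHS]eq_bigr do rewrite defect mulrDr.
  by rewrite big_split /= !sum_mul_delta fw mulrDl.
by move/eqP; rewrite mulf_eq0 (negbTE fw1_neq0) orbF => /eqP.
Qed.

Lemma johnson_eigen_pair_sum (h : kset n k -> C) (X Y : kset n k) :
  johnson_eigen gamma lam h -> #|val X :&: val Y| = #|val w1 :&: val w2| -> h X + h Y = 0.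
Proof.
move=> eig_h cardI; have [s [<- <-]] := kset_act_pair cardI.
exact: (johnson_eigen_w_sum (johnson_eigen_act s eig_h)).
Qed.

Lemma johnson_eigen_eq0 (h : kset n k -> C) :
  (k.*2 < n)%N -> johnson_eigen gamma lam h -> forall v, h v = 0.
Proof.
move=> lt_2k_n eig_h v.
have le_mk : (#|val w1 :&: val w2| <= k)%N.
  by apply: leq_trans (subset_leq_card (subsetIl _ _)) _; rewrite (eqP (valP w1)).
have [N [Y [oddN YN Ycons]]] := kset_odd_cycle lt_2k_n le_mk.
have [s <-] := kset_act_transitive (Y 0%N) v.
apply: (@alternating_cycle_eq0 _ (fun i => h (kset_act s (Y i))) N oddN).
  by rewrite YN.
by move=> i; apply: (johnson_eigen_pair_sum (johnson_eigen_act s eig_h) (Ycons i)).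
Qed.

End SearchHamiltonian.

Theorem proposition5 (n k : nat) (hk : (1 <= k)%N) (hn : (2 * k < n)%N)
  (C : numClosedFieldType) (gamma : C) (hgamma : 0 < gamma)
  (w1 w2 : kset n k) (hw : w1 != w2)
  (f : kset n k -> C) (lam : C)
  (hinv : in_Hinv w1 w2 f) (hnz : exists v, f v != 0)
  (heig : forall v, search_H gamma w1 w2 f v = lam * f v) :
  let alpha := f w1 in
  (in_spectrum (fun g : kset n k -> C => fun v => - gamma * johnson_A g v) lam <->
     (forall v, - gamma * johnson_A f v = lam * f v)) /\
  ((forall v, - gamma * johnson_A f v = lam * f v) <-> alpha = 0).
Proof.
move=> alpha; have fw := in_Hinv_swap hinv.
have eigA_f_iff := search_eigen_johnson_iff hw fw heig.
split=> //; split=> [[g [[v gv] eig_g]] | eig_f]; last by exists f.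
apply/eigA_f_iff; apply/eqP; apply: contraT => fw1_neq0.
have lt_2k_n : (k.*2 < n)%N by rewrite -mul2n.
by rewrite (johnson_eigen_eq0 fw heig fw1_neq0 lt_2k_n eig_g) eqxx in gv.
Qed.
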